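(* Let $A\in\mathbb{R}^{m\times n}$, $B\in\mathbb{R}^{p\times n}$ with $\mathrm{rank}(B)=p\le n$, $b\in\mathbb{R}^m$, $d\in\mathbb{R}^p$, and suppose the polyhedral convex set $D:=\{x\in\mathbb{R}^n\mid Ax\ge b,\ Bx=d\}$ is nonempty. Fix $x\in\mathbb{R}^n$, and let $I(x)$, $\mathcal{D}(x)$ and $\mathcal{P}(x)$ be as defined in the context. Define \[ P_0:=I_n-[A_{I(x)}^T\ B^T]\left(\begin{bmatrix}A_{I(x)}\\ B\end{bmatrix}[A_{I(x)}^T\ B^T]\right)^{\dagger}\begin{bmatrix}A_{I(x)}\\ B\end{bmatrix}. \] Then $P_0\in\mathcal{P}(x)$.
   Context: $\Pi_D(x)$ denotes the Euclidean projection of $x$ onto $D$, $I_n$ the $n\times n$ identity, $N^\dagger$ the Moore–Penrose pseudo-inverse. For an index set $K\subseteq\{1,\dots,m\}$, $A_K$ is the submatrix of $A$ formed by the rows indexed by $K$, and $A_i$ is the $i$th row of $A$. Define $M(x)$ as the set of $(\lambda,\mu)\in\mathbb{R}^m\times\mathbb{R}^p$ such that $\Pi_D(x)-x+A^T\lambda+B^T\mu=0$, $A\Pi_D(x)-b\ge0$, $B\Pi_D(x)-d=0$, $\lambda\le0$, $\lambda^T(A\Pi_D(x)-b)=0$. Let $I(x):=\{i\in\{1,\dots,m\}\mid A_i\Pi_D(x)=b_i\}$. Let $\mathcal{D}(x)$ be the collection of index sets $K\subseteq\{1,\dots,m\}$ such that there exists $(\lambda,\mu)\in M(x)$ with $\mathrm{supp}(\lambda)\subseteq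 K\subseteq I(x)$ (where $\mathrm{supp}(\lambda)=\{i:\lambda_i\neq0\}$) and $[A_K^T\ B^T]$ has full column rank. Finally \[ \mathcal{P}(x):=\left\{I_n-[A_K^T\ B^T]\left(\begin{bmatrix}A_K\\ B\end{bmatrix}[A_K^T\ B^T]\right)^{-1}\begin{bmatrix}A_K\\ B\end{bmatrix}\ \middle|\ K\in\mathcal{D}(x)\right\}. \] *)

From HB Require Import structures.
From mathcomp Require Import all_boot all_order all_algebra.
From mathcomp Require Import boolp classical_sets reals.
Set Implicit Arguments. Unset Strict Implicit. Unset Printing Implicit Defensive.
Import Order.TTheory GRing.Theory Num.Theory.
Local Open Scope ring_scope.

Section Defs.
Variables (R : realType).

Definition vge (k : nat) (u v : 'cV[R]_k) : Prop := forall i, v i 0 <= u i 0.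

Definition sqnorm (k : nat) (u : 'cV[R]_k) : R := \sum_i (u i 0) ^+ 2.

Definition polyD (m p n : nat) (A : 'M[R]_(m, n)) (b : 'cV[R]_m)
  (B : 'M[R]_(p, n)) (d : 'cV[R]_p) : set 'cV[R]_n :=
  fun y => vge (A *m y) b /\ B *m y = d.

(* Euclidean projection of x onto a set S (a nearest point of S to x;
   unique when S is nonempty closed convex; x itself if no nearest point) *)
Definition proj (n : nat) (S : set 'cV[R]_n) (x : 'cV[R]_n) : 'cV[R]_n :=
  xget x (fun y => S y /\ forall z, S z -> sqnorm (x - y) <= sqnorm (x - z)).

Definition penrose (k l : nat) (N : 'M[R]_(k, l)) (X : 'M[R]_(l, k)) : Prop :=
  [/\ N *m X *m N = N, X *m N *m X = X, (N *m X)^T = N *m X & (X *m N)^T = X *m N].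
Definition mp_pinv (k l : nat) (N : 'M[R]_(k, l)) : 'M[R]_(l, k) :=
  xget 0 (penrose N).

(* A_K : rows of A indexed by K (in increasing order) *)
Definition subrows (m n : nat) (A : 'M[R]_(m, n)) (K : {set 'I_m}) : 'M[R]_(#|K|, n) :=
  \matrix_(i < #|K|, j < n) A (enum_val i) j.

Definition gmat (m p n : nat) (A : 'M[R]_(m, n)) (B : 'M[R]_(p, n)) (K : {set 'I_m})
  : 'M[R]_(n, #|K| + p) := row_mx (subrows A K)^T B^T.

Variables (m p n : nat) (A : 'M[R]_(m, n)) (b : 'cV[R]_m)
  (B : 'M[R]_(p, n)) (d : 'cV[R]_p).

Definition PiD (x : 'cV[R]_n) := proj (polyD A b B d) x.

Definition Mset (x : 'cV[R]_n) (lam : 'cV[R]_m) (mu : 'cV[R]_p) : Prop :=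
  let y := PiD x in
  [/\ y - x + A^T *m lam + B^T *m mu = 0,
      vge (A *m y - b) 0,
      B *m y - d = 0,
      vge 0 lam
    & lam^T *m (A *m y - b) = 0].

Definition Iact (x : 'cV[R]_n) : {set 'I_m} :=
  [set i | (A *m PiD x) i 0 == b i 0].

Definition inDx (x : 'cV[R]_n) (K : {set 'I_m}) : Prop :=
  [/\ exists lam mu, Mset x lam mu /\ (forall i, lam i 0 != 0 -> i \in K),
      K \subset Iact x
    & \rank (gmat A B K) = (#|K| + p)%N].

Definition projK (K : {set 'I_m}) : 'M[R]_n :=
  1%:M - gmat A B K *m invmx ((gmat A B K)^T *m gmat A B K) *m (gmat A B K)^T.

Definition Pset (x : 'cV[R]_n) : set 'M[R]_n :=
  fun P => exists K, inDx x K /\ P = projK K.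

Definition P0 (x : 'cV[R]_n) : 'M[R]_n :=
  let G := gmat A B (Iact x) in
  1%:M - G *m mp_pinv (G^T *m G) *m G^T.

End Defs.

From HB Require Import structures.
From mathcomp Require Import all_boot all_order all_algebra.
From mathcomp Require Import boolp classical_sets reals.
From mathcomp Require Import zify lra.
(* Give finset's subsetP, sub1set, ... precedence over classical_sets'. *)
From mathcomp Require Import fintype finset.
Import Order.TTheory GRing.Theory Num.Theory.
Local Open Scope ring_scope.

Set Implicit Arguments. Unset Strict Implicit. Unset Printing Implicit Defensive.

(* The projection y = Pi_D(x) is characterised by KKT multipliers (lam, mu)
   with lam <= 0. They exist by induction on the number of inequalities: a new
   inequality is either inactive at the projection onto the larger polyhedron,
   or the new projection lies on its hyperplane, and comparing the variational
   inequalities of the two projections shows that its multiplier is <= 0.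
   A Caratheodory-type ratio test shrinks supp lam until the rows of A indexed
   by it, together with the rows of B, are linearly independent; extending it
   to a maximal such set K inside I(x) gives K in D(x).  By maximality
   G = [A_I(x)^T B^T] factors as H C, with H = [A_K^T B^T] of full column rank
   and C of full row rank.  Then (G^T G)^+ = P (H^T H)^-1 P^T for
   P = C^T (C C^T)^-1, hence G (G^T G)^+ G^T = H (H^T H)^-1 H^T. *)

Section MatrixFacts.
Variable R : realType.

Lemma mulmx_trmx_eq0 (k l : nat) (M : 'M[R]_(k, l)) : M *m M^T = 0 -> M = 0.
Proof.
move=> h; apply/matrixP => i j; rewrite mxE.
have := congr1 (fun N : 'M[R]_k => N i i) h; rewrite !mxE => hii.
have : M i j * M^T j i = 0.
  apply: (psumr_eq0P _ hii) => // j' _.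
  by rewrite mxE -expr2 sqr_ge0.
by rewrite mxE => /eqP; rewrite mulf_eq0 orbb => /eqP.
Qed.

Lemma gram_unitmx (k l : nat) (M : 'M[R]_(k, l)) : row_free M -> M *m M^T \in unitmx.
Proof.
move=> fM; rewrite -row_free_unit; apply: inj_row_free => v hv.
have : (v *m M) *m (v *m M)^T = 0 by rewrite trmx_mul !mulmxA -(mulmxA v) hv mul0mx.
by move/mulmx_trmx_eq0/eqP; rewrite mulmx_free_eq0 // => /eqP.
Qed.

Lemma mulmx_trmx_range (k l : nat) (F : 'M[R]_(k, l)) (w : 'cV[R]_l) :
  exists nu : 'cV[R]_k, F *m F^T *m nu = F *m w.
Proof.
have FFt_sub : (F *m F^T <= F^T)%MS by apply: submxMl.
have sub_FFt : (F^T <= F *m F^T)%MS.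
  rewrite -(mxrank_leqif_sup FFt_sub).2 eqn_leq (mxrankS FFt_sub) /=.
  set Z := kermx (F *m F^T).
  have ZF : Z *m F = 0.
    by apply: mulmx_trmx_eq0; rewrite trmx_mul mulmxA -(mulmxA Z) mulmx_ker mul0mx.
  have : (Z <= kermx F)%MS by rewrite sub_kermx ZF.
  move/mxrankS; rewrite !mxrank_ker mxrank_tr.
  by have := rank_leq_row F; have := rank_leq_row (F *m F^T); lia.
have /submxP[D hD] : (w^T *m F^T <= F *m F^T)%MS := submx_trans (submxMl _ _) sub_FFt.
by exists D^T; have := congr1 trmx hD; rewrite !trmx_mul !trmxK => <-.
Qed.

Lemma mulmx_col_factor (k l r : nat) (G : 'M[R]_(k, l)) (H : 'M[R]_(k, r)) :
  (forall j, exists w, col j G = H *m w) -> exists C, G = H *m C.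
Proof.
move=> hG; have /submxP[D hD] : (G^T <= H^T)%MS.
  apply/row_subP => j; have [w hw] := hG j.
  by apply/submxP; exists w^T; rewrite -tr_col hw trmx_mul.
by exists D^T; rewrite -[G]trmxK hD trmx_mul trmxK.
Qed.

End MatrixFacts.

Section DotProduct.
Variable R : realType.

Definition vdot k (u v : 'cV[R]_k) : R := (u^T *m v) 0 0.

Lemma vdotE k (u v : 'cV[R]_k) : vdot u v = \sum_i u i 0 * v i 0.
Proof. by rewrite /vdot mxE; apply: eq_bigr => i _; rewrite mxE. Qed.

Lemma vdotC k (u v : 'cV[R]_k) : vdot u v = vdot v u.
Proof. by rewrite !vdotE; apply: eq_bigr => i _; rewrite mulrC. Qed.

Lemma vdotDl k (u w v : 'cV[R]_k) : vdot (u + w) v = vdot u v + vdot w v.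
Proof. by rewrite /vdot linearD /= mulmxDl [LHS]mxE. Qed.

Lemma vdotBl k (u w v : 'cV[R]_k) : vdot (u - w) v = vdot u v - vdot w v.
Proof. by rewrite /vdot linearB /= mulmxBl !mxE. Qed.

Lemma vdotBr k (u w v : 'cV[R]_k) : vdot v (u - w) = vdot v u - vdot v w.
Proof. by rewrite /vdot mulmxBr !mxE. Qed.

Lemma vdotr0 k (u : 'cV[R]_k) : vdot u 0 = 0.
Proof. by rewrite /vdot mulmx0 mxE. Qed.

Lemma vdot_trmx k l (M : 'M[R]_(k, l)) u v : vdot (M^T *m u) v = vdot u (M *m v).
Proof. by rewrite /vdot trmx_mul trmxK mulmxA. Qed.

Lemma vdot_col k1 k2 (u1 v1 : 'cV[R]_k1) (u2 v2 : 'cV[R]_k2) :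
  vdot (col_mx u1 u2) (col_mx v1 v2) = vdot u1 v1 + vdot u2 v2.
Proof. by rewrite /vdot tr_col_mx mul_row_col [LHS]mxE. Qed.

Lemma vdot1 (u v : 'cV[R]_1) : vdot u v = u 0 0 * v 0 0.
Proof. by rewrite vdotE big_ord1. Qed.

Lemma vdot_ge0 k (u : 'cV[R]_k) : 0 <= vdot u u.
Proof. by rewrite vdotE; apply: sumr_ge0 => i _; rewrite -expr2 sqr_ge0. Qed.

Lemma vdot_eq0 k (u : 'cV[R]_k) : vdot u u = 0 -> u = 0.
Proof.
rewrite vdotE => h; apply/matrixP => i j; rewrite (ord1 j) mxE.
have /eqP : u i 0 * u i 0 = 0 by apply: (psumr_eq0P _ h) => // i' _; rewrite -expr2 sqr_ge0.
by rewrite mulf_eq0 orbb => /eqP.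
Qed.

Lemma sqnormE k (u : 'cV[R]_k) : sqnorm u = vdot u u.
Proof. by rewrite /sqnorm vdotE; apply: eq_bigr => i _; rewrite expr2. Qed.

Lemma vdot_le0 k (u v : 'cV[R]_k) : vge 0 u -> vge v 0 -> vdot u v <= 0.
Proof.
move=> hu hv; rewrite vdotE; apply: sumr_le0 => i _.
by apply: mulr_le0_ge0; [have := hu i | have := hv i]; rewrite mxE.
Qed.

End DotProduct.

Section Polyhedra.
Variables (R : realType) (n : nat).

Lemma vge_col k1 k2 (u1 v1 : 'cV[R]_k1) (u2 v2 : 'cV[R]_k2) :
  vge (col_mx u1 u2) (col_mx v1 v2) <-> vge u1 v1 /\ vge u2 v2.
Proof.
split=> [h|[h1 h2] i].
  by split=> i; [have := h (lshift k2 i) | have := h (rshift k1 i)];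
    rewrite ?col_mxEu ?col_mxEd.
by case: (split_ordP i) => j ->; rewrite ?col_mxEu ?col_mxEd.
Qed.

Lemma polyD_colA k m p (a : 'M[R]_(k, n)) (A : 'M[R]_(m, n)) b1 b
    (B : 'M[R]_(p, n)) d z :
  polyD (col_mx a A) (col_mx b1 b) B d z <-> vge (a *m z) b1 /\ polyD A b B d z.
Proof.
rewrite /polyD mul_col_mx.
by split=> [[/vge_col[] ? ? ?]|[? [? ?]]]; do ?split=> //; apply/vge_col.
Qed.

Lemma polyD_colB k m p (a : 'M[R]_(k, n)) (A : 'M[R]_(m, n)) b1 b
    (B : 'M[R]_(p, n)) d z :
  polyD A b (col_mx a B) (col_mx b1 d) z <-> polyD A b B d z /\ a *m z = b1.
Proof. by rewrite /polyD mul_col_mx; split=> [[? /eq_col_mx[-> ->]]|[[? ->] ->]]. Qed.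

(* The point where the segment from y to z crosses the hyperplane a w = b1. *)
Lemma polyD_eq_feasible m p (a : 'rV[R]_n) (A : 'M[R]_(m, n)) (b1 : 'cV[R]_1) b
    (B : 'M[R]_(p, n)) d y z :
  polyD A b B d y -> (a *m y) 0 0 < b1 0 0 ->
  polyD (col_mx a A) (col_mx b1 b) B d z ->
  exists w, polyD A b (col_mx a B) (col_mx b1 d) w.
Proof.
move=> [hyA hyB] hay /polyD_colA[hza [hzA hzB]].
have haz : b1 0 0 <= (a *m z) 0 0 := hza 0.
set t := (b1 0 0 - (a *m y) 0 0) / ((a *m z) 0 0 - (a *m y) 0 0).
have hden : 0 < (a *m z) 0 0 - (a *m y) 0 0 by lra.
have ht0 : 0 <= t by rewrite divr_ge0 //; lra.
have ht1 : t <= 1 by rewrite ler_pdivrMr // mul1r; lra.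
have ht : t * ((a *m z) 0 0 - (a *m y) 0 0) = b1 0 0 - (a *m y) 0 0.
  by rewrite divfK // gt_eqF.
pose w := y + t *: (z - y).
have Mw k (M : 'M[R]_(k, n)) i :
    (M *m w) i 0 = (M *m y) i 0 + t * ((M *m z) i 0 - (M *m y) i 0).
  by rewrite mulmxDr -scalemxAr mulmxBr !mxE.
exists w; apply/polyD_colB; split; first split.
- move=> i; rewrite Mw; have := hzA i; have := hyA i => hyi hzi.
  have : 0 <= (1 - t) * ((A *m y) i 0 - b i 0) by apply: mulr_ge0; lra.
  have : 0 <= t * ((A *m z) i 0 - b i 0) by apply: mulr_ge0; lra.
  nra.
- by rewrite mulmxDr -scalemxAr mulmxBr hyB hzB subrr scaler0 addr0.
- by apply/matrixP => i j; rewrite (ord1 i) (ord1 j) Mw; lra.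
Qed.

End Polyhedra.

Section Projection.
Variables (R : realType) (n : nat) (x : 'cV[R]_n).

Definition KKT m p (A : 'M[R]_(m, n)) b (B : 'M[R]_(p, n)) d y lam mu :=
  [/\ polyD A b B d y, y - x + A^T *m lam + B^T *m mu = 0, vge 0 lam
    & forall i, lam i 0 * (A *m y - b) i 0 = 0].

Section KKTPoint.
Variables (m p : nat) (A : 'M[R]_(m, n)) (b : 'cV[R]_m) (B : 'M[R]_(p, n)) (d : 'cV[R]_p).
Variables (y : 'cV[R]_n) (lam : 'cV[R]_m) (mu : 'cV[R]_p).
Hypothesis hK : KKT A b B d y lam mu.

Lemma kkt_vdot z :
  vdot (x - y) (z - y) = vdot lam (A *m z - b) + vdot mu (B *m z - d).
Proof.
case: hK => [[_ hBy] hs _ hc].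
have -> : x - y = A^T *m lam + B^T *m mu.
  by rewrite -[LHS]addr0 -hs !addrA subrK subrr add0r.
rewrite vdotDl !vdot_trmx !mulmxBr hBy.
have -> : A *m z - A *m y = (A *m z - b) - (A *m y - b) by rewrite opprB addrA subrK.
by rewrite vdotBr [vdot lam (A *m y - b)]vdotE big1 ?subr0.
Qed.

Lemma kkt_vdot_le0 z : polyD A b B d z -> vdot (x - y) (z - y) <= 0.
Proof.
move=> [hzA hzB]; rewrite kkt_vdot hzB subrr vdotr0 addr0.
apply: vdot_le0; first by case: hK.
by move=> i; have := hzA i; rewrite !mxE subr_ge0.
Qed.

Lemma proj_kkt : proj (polyD A b B d) x = y.
Proof.
have hy : polyD A b B d y by case: hK.
have dist z : sqnorm (x - z) =
    sqnorm (x - y) - 2 * vdot (x - y) (z - y) + vdot (z - y) (z - y).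
  rewrite !sqnormE (_ : x - z = (x - y) - (z - y)); last by rewrite opprB addrA subrK.
  move: (x - y) (z - y) => u v; rewrite vdotBl !vdotBr (vdotC v u); lra.
apply: xget_unique => [|y0 [hy0 hmin]].
  split=> // z hz; rewrite (dist z).
  by have := kkt_vdot_le0 hz; have := vdot_ge0 (z - y); lra.
have := hmin y hy; rewrite (dist y0) => hle.
have := kkt_vdot_le0 hy0; have := vdot_ge0 (y0 - y) => h1 h2.
by apply/eqP; rewrite -subr_eq0; apply/eqP/vdot_eq0; lra.
Qed.

End KKTPoint.

Lemma kkt_inactive k m p (a : 'M[R]_(k, n)) (A : 'M[R]_(m, n)) b1 b
    (B : 'M[R]_(p, n)) d y lam mu :
  KKT A b B d y lam mu -> vge (a *m y) b1 ->
  KKT (col_mx a A) (col_mx b1 b) B d y (col_mx 0 lam) mu.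
Proof.
case=> hy hs hl hc hay; split.
- exact/polyD_colA.
- by rewrite tr_col_mx mul_row_col mulmx0 add0r.
- by rewrite -col_mx0; apply/vge_col; split=> // i; rewrite mxE.
- move=> i; rewrite mul_col_mx opp_col_mx add_col_mx.
  case: (split_ordP i) => j ->; last by rewrite !col_mxEd.
  by rewrite !col_mxEu mxE mul0r.
Qed.

Lemma kkt_relax_eq k m p (a : 'M[R]_(k, n)) (A : 'M[R]_(m, n)) b1 b
    (B : 'M[R]_(p, n)) d y lam nu mu :
  KKT A b (col_mx a B) (col_mx b1 d) y lam (col_mx nu mu) -> vge 0 nu ->
  KKT (col_mx a A) (col_mx b1 b) B d y (col_mx nu lam) mu.
Proof.
case=> /polyD_colB[hy hay] hs hl hc hnu; split.
- by apply/polyD_colA; split=> // i; rewrite hay.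
- by rewrite -hs !tr_col_mx !mul_row_col !addrA (addrAC _ (a^T *m nu)).
- by rewrite -col_mx0; apply/vge_col.
- move=> i; rewrite mul_col_mx opp_col_mx add_col_mx.
  case: (split_ordP i) => j ->; last by rewrite !col_mxEd.
  by rewrite !col_mxEu hay subrr mxE mulr0.
Qed.

(* If nu > 0, the variational inequalities at y and y' add up to
   |y - y'|^2 < 0. *)
Lemma kkt_eq_multiplier_le0 m p (a : 'rV[R]_n) (A : 'M[R]_(m, n)) (b1 : 'cV[R]_1) b
    (B : 'M[R]_(p, n)) d y lam mu y' lam' nu mu' :
  KKT A b B d y lam mu -> (a *m y) 0 0 < b1 0 0 ->
  KKT A b (col_mx a B) (col_mx b1 d) y' lam' (col_mx nu mu') -> vge 0 nu.
Proof.
move=> hK hay hK' i; rewrite (ord1 i) mxE leNgt; apply/negP => hnu.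
have [[hyA hyB] _ _ _] := hK.
have [/polyD_colB[hy' _] _ hl' _] := hK'.
have h1 := kkt_vdot_le0 hK hy'.
have h2 := kkt_vdot hK' y.
rewrite mul_col_mx opp_col_mx add_col_mx vdot_col hyB subrr vdotr0 addr0 vdot1 in h2.
rewrite [(a *m y - b1) 0 0]mxE [(- b1) 0 0]mxE in h2.
have h3 : vdot lam' (A *m y - b) <= 0.
  by apply: vdot_le0 => // j; have := hyA j; rewrite !mxE subr_ge0.
have h4 : nu 0 0 * ((a *m y) 0 0 - b1 0 0) < 0.
  by rewrite pmulr_rlt0 // subr_lt0.
have h5 : vdot (x - y') (y - y') + vdot (x - y) (y' - y) = vdot (y - y') (y - y').
  rewrite !vdotBl !vdotBr.
  by have := vdotC y' y; have := vdotC y x; have := vdotC y' x; lra.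
by have := vdot_ge0 (y - y'); lra.
Qed.

Lemma kkt_exists_col m p (a : 'rV[R]_n) (A : 'M[R]_(m, n)) (b1 : 'cV[R]_1) b
    (B : 'M[R]_(p, n)) d :
  (forall p' (B' : 'M[R]_(p', n)) d', (exists z, polyD A b B' d' z) ->
     exists y lam mu, KKT A b B' d' y lam mu) ->
  (exists z, polyD (col_mx a A) (col_mx b1 b) B d z) ->
  exists y lam mu, KKT (col_mx a A) (col_mx b1 b) B d y lam mu.
Proof.
move=> IH [z hz]; case/polyD_colA: (hz) => _ hz'.
have [y [lam [mu hK]]] := IH _ B d (ex_intro _ z hz').
have [hay | hay] := lerP (b1 0 0) ((a *m y) 0 0).
  by exists y, (col_mx 0 lam), mu; apply: kkt_inactive => // i; rewrite (ord1 i).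
have [hy _ _ _] := hK.
have [w hw] := polyD_eq_feasible hy hay hz.
have [y' [lam' [mu' hK']]] := IH _ _ _ (ex_intro _ w hw).
rewrite -[mu'](@vsubmxK _ 1 p) in hK'.
exists y', (col_mx (usubmx mu') lam'), (dsubmx mu').
exact: kkt_relax_eq hK' (kkt_eq_multiplier_le0 hK hay hK').
Qed.

Lemma kkt_exists m p (A : 'M[R]_(m, n)) b (B : 'M[R]_(p, n)) d :
  (exists z, polyD A b B d z) -> exists y lam mu, KKT A b B d y lam mu.
Proof.
elim: m p A b B d => [|m IH] p A b B d.
  case=> z hz; have [nu hnu] := mulmx_trmx_range B (x - z).
  exists (x - B^T *m nu), 0, nu; split; last by case.
  - split; first by case.
    by rewrite mulmxBr mulmxA hnu mulmxBr hz.2 opprB addrC subrK.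
  - by rewrite mulmx0 addr0 addrAC subrK subrr.
  - by case.
have := @kkt_exists_col m p (usubmx (A : 'M_(1 + m, n))) (dsubmx (A : 'M_(1 + m, n)))
  (usubmx (b : 'cV_(1 + m))) (dsubmx (b : 'cV_(1 + m))) B d (fun p' => IH p' _ _).
by rewrite !vsubmxK.
Qed.

End Projection.

Section ActiveSets.
Variables (R : realType) (m p n : nat) (A : 'M[R]_(m, n)) (B : 'M[R]_(p, n)).
Hypothesis rankB : \rank B = p.

Definition supp (v : 'cV[R]_m) : {set 'I_m} := [set i | v i 0 != 0].

Definition indep (K : {set 'I_m}) := forall (al : 'cV[R]_m) (be : 'cV[R]_p),
  supp al \subset K -> A^T *m al + B^T *m be = 0 -> al = 0 /\ be = 0.

Definition restr (K : {set 'I_m}) (al : 'cV[R]_m) : 'cV[R]_#|K| :=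
  \col_k al (enum_val k) 0.

Definition extend (K : {set 'I_m}) (u : 'cV[R]_#|K|) : 'cV[R]_m :=
  \col_i \sum_(k | enum_val k == i) u k 0.

Lemma suppN (v : 'cV[R]_m) : supp (- v) = supp v.
Proof. by apply/setP => i; rewrite !inE mxE oppr_eq0. Qed.

Lemma supp_delta i : supp (delta_mx i 0) = [set i].
Proof.
apply/setP => j; rewrite !inE mxE eqxx andbT.
by case: (j == i); rewrite ?oner_neq0 ?mulr0n ?eqxx.
Qed.

Lemma subrows_restr (K : {set 'I_m}) al :
  supp al \subset K -> (subrows A K)^T *m restr K al = A^T *m al.
Proof.
move=> hs; apply/matrixP => j c; rewrite (ord1 c) !mxE.
rewrite (bigID (mem K)) /= [X in _ + X]big1 ?addr0; last first.
  move=> i hiK; apply/eqP; rewrite mulf_eq0 orbC; apply/orP; left.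
  by apply: contraR hiK => hi; apply: (subsetP hs); rewrite inE.
by rewrite [RHS]big_enum_val; apply: eq_bigr => k _; rewrite !mxE.
Qed.

Lemma supp_extend (K : {set 'I_m}) (u : 'cV[R]_#|K|) : supp (extend u) \subset K.
Proof.
apply/subsetP => i; rewrite inE mxE; apply: contraR => hi; rewrite big_pred0 // => k.
by apply/negP => /eqP hk; move: hi; rewrite -hk enum_valP.
Qed.

Lemma restr_extend (K : {set 'I_m}) (u : 'cV[R]_#|K|) : restr K (extend u) = u.
Proof.
apply/matrixP => k c; rewrite (ord1 c) !mxE (big_pred1 k) // => k'.
by apply/eqP/eqP => [/enum_val_inj|->].
Qed.

Lemma gmat_mul (K : {set 'I_m}) l (u : 'M[R]_(#|K|, l)) (v : 'M[R]_(p, l)) :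
  gmat A B K *m col_mx u v = (subrows A K)^T *m u + B^T *m v.
Proof. exact: mul_row_col. Qed.

Lemma gmat_col_l (K : {set 'I_m}) k :
  col (lshift p k) (gmat A B K) = A^T *m delta_mx (enum_val k) 0.
Proof.
rewrite -colE; apply/matrixP => r c.
by rewrite !mxE (unsplitK (inl k : 'I_#|K| + 'I_p)) !mxE.
Qed.

Lemma gmat_col_r (K : {set 'I_m}) j :
  col (rshift #|K| j) (gmat A B K) = B^T *m delta_mx j 0.
Proof.
rewrite -colE; apply/matrixP => r c.
by rewrite !mxE (unsplitK (inr j : 'I_#|K| + 'I_p)) !mxE.
Qed.

Lemma indep_row_free (K : {set 'I_m}) : indep K -> row_free (gmat A B K)^T.
Proof.
move=> hK; apply: inj_row_free => v /(congr1 trmx); rewrite trmx_mul trmxK trmx0.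
rewrite -[v^T]vsubmxK gmat_mul -[usubmx _]restr_extend subrows_restr ?supp_extend //.
case/(hK _ _ (supp_extend _)) => /(congr1 (restr K)) hu hv.
rewrite restr_extend in hu; rewrite -[v]trmxK -[v^T]vsubmxK hu hv.
by apply/matrixP => i j; rewrite !mxE; case: splitP => k _; rewrite !mxE ?big1.
Qed.

Lemma gmat_rank (K : {set 'I_m}) : indep K -> \rank (gmat A B K) = (#|K| + p)%N.
Proof. by move/indep_row_free; rewrite /row_free mxrank_tr => /eqP. Qed.

Lemma gmat_factor (J K : {set 'I_m}) :
  (forall i, i \in J -> exists al be,
     supp al \subset K /\ A^T *m delta_mx i 0 = A^T *m al + B^T *m be) ->
  exists C, gmat A B J = gmat A B K *m C.
Proof.
move=> hJ; apply: mulmx_col_factor => j; case: (split_ordP j) => k ->.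
  have [al [be [hs he]]] := hJ _ (enum_valP k).
  by exists (col_mx (restr K al) be); rewrite gmat_col_l he gmat_mul subrows_restr.
exists (col_mx 0 (delta_mx k 0)).
by rewrite gmat_col_r gmat_mul mulmx0 add0r.
Qed.

Lemma trmx_inj_of_rank (be : 'cV[R]_p) : B^T *m be = 0 -> be = 0.
Proof.
move/(congr1 trmx); rewrite trmx_mul trmxK trmx0 => /eqP.
by rewrite mulmx_free_eq0 /row_free ?rankB // trmx_eq0 => /eqP.
Qed.

Lemma not_indep_dependence (K : {set 'I_m}) : ~ indep K ->
  exists al be, [/\ supp al \subset K, A^T *m al + B^T *m be = 0 & exists i, 0 < al i 0].
Proof.
move=> hK.
have [al [be [hs he /cV0Pn[i hi]]]] : exists al be,
    [/\ supp al \subset K, A^T *m al + B^T *m be = 0 & al != 0].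
  apply: contrapT => hno; apply: hK => al be hs he.
  have hal : al = 0 by case: (eqVneq al 0) => [//|hal]; case: hno; exists al, be.
  by split=> //; apply: trmx_inj_of_rank; rewrite -he hal mulmx0 add0r.
have [hpos | hneg] := ltrP 0 (al i 0); first by exists al, be; split=> //; exists i.
exists (- al), (- be); split; first by rewrite suppN.
  by rewrite !mulmxN -opprD he oppr0.
by exists i; rewrite mxE oppr_gt0 lt_neqAle hi hneg.
Qed.

(* Ratio test: move lam along the dependence al as far as lam <= 0 allows;
   the coordinate attaining the minimal ratio then vanishes. *)
Lemma reduce_support_step (lam : 'cV[R]_m) (mu : 'cV[R]_p) :
  ~ indep (supp lam) -> vge 0 lam ->
  exists lam' mu', [/\ vge 0 lam', supp lam' \proper supp lam
    & A^T *m lam' + B^T *m mu' = A^T *m lam + B^T *m mu].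
Proof.
move=> hdep hl.
have [al [be [hs he [i0 hi0]]]] := not_indep_dependence hdep.
pose F i := - lam i 0 / al i 0.
have [im him hmin] := @arg_minP _ R _ i0 (fun i => 0 < al i 0) F hi0.
set t := F im.
have hlm : lam im 0 <= 0 by have := hl im; rewrite mxE.
have t0 : 0 <= t by rewrite /t /F divr_ge0 ?oppr_ge0 // ltW.
have lamE i : (lam + t *: al) i 0 = lam i 0 + t * al i 0 by rewrite !mxE.
exists (lam + t *: al), (mu + t *: be); split.
- move=> i; rewrite lamE mxE.
  have hli : lam i 0 <= 0 by have := hl i; rewrite mxE.
  have [hai | hai] := ltrP 0 (al i 0).
    have h : t * al i 0 <= - lam i 0 by rewrite -ler_pdivlMr //; exact: hmin.
    lra.
  have : t * al i 0 <= 0 by apply: mulr_ge0_le0.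
  lra.
- apply/properP; split.
    apply/subsetP => i; rewrite !inE lamE; apply: contraNneq => hi.
    have hni : i \notin supp lam by rewrite inE hi eqxx.
    have -> : al i 0 = 0.
      by have := contra (subsetP hs i) hni; rewrite inE negbK => /eqP.
    by rewrite mulr0 addr0 hi.
  exists im; first by apply: (subsetP hs); rewrite inE gt_eqF.
  by rewrite inE lamE /t /F divfK ?addrN ?eqxx // gt_eqF.
- by rewrite !mulmxDr -!scalemxAr addrACA -scalerDr he scaler0 addr0.
Qed.

Lemma reduce_support (lam : 'cV[R]_m) (mu : 'cV[R]_p) : vge 0 lam ->
  exists lam' mu', [/\ vge 0 lam', supp lam' \subset supp lam,
    A^T *m lam' + B^T *m mu' = A^T *m lam + B^T *m mu & indep (supp lam')].
Proof.
have [k] := ubnP #|supp lam|; elim: k lam mu => // k IH lam mu /ltnSE hk hl.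
have [hind | hdep] := pselect (indep (supp lam)); first by exists lam, mu.
have [lam1 [mu1 [hl1 hpr he]]] := reduce_support_step mu hdep hl.
have [lam2 [mu2 [hl2 hs2 he2 hi2]]] := IH lam1 mu1 (leq_trans (proper_card hpr) hk) hl1.
exists lam2, mu2; split=> //; last by rewrite he2 he.
exact: subset_trans hs2 (proper_sub hpr).
Qed.

Lemma indep_maximal_extension (S I : {set 'I_m}) : S \subset I -> indep S ->
  exists K : {set 'I_m}, [/\ S \subset K, K \subset I, indep K
    & forall i, i \in I -> i \notin K -> ~ indep (i |: K)].
Proof.
move=> hSI hS; pose P (K : {set 'I_m}) := `[< indep K >] && (K \subset I).
have [K /maxsetP[/andP[/asboolP hK hKI] hmax] hSK] :=
  @maxset_exists _ P S (introT andP (conj (asboolT hS) hSI)).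
exists K; split=> // i hi hiK hind.
have : i |: K = K.
  by apply: hmax; [rewrite /P asboolT // subUset sub1set hi | exact: subsetUr].
by move/setP/(_ i); rewrite !inE eqxx (negbTE hiK).
Qed.

Lemma indep_maximal_span (I K : {set 'I_m}) : indep K ->
  (forall i, i \in I -> i \notin K -> ~ indep (i |: K)) ->
  forall i, i \in I -> exists al be,
    supp al \subset K /\ A^T *m delta_mx i 0 = A^T *m al + B^T *m be.
Proof.
move=> hK hmax i hi.
have [hiK | hiK] := boolP (i \in K).
  by exists (delta_mx i 0), 0; rewrite supp_delta sub1set mulmx0 addr0.
have [al [be [hs he [j hj]]]] := not_indep_dependence (hmax i hi hiK).
have hai : al i 0 != 0.
  apply/negP => /eqP hai0.
  have hsK : supp al \subset K.
    apply/subsetP => k hk; have := subsetP hs k hk; rewrite !inE => /orP[/eqP ek|//].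
    by move: hk; rewrite ek inE hai0 eqxx.
  by have [al0 _] := hK al be hsK he; move: hj; rewrite al0 mxE ltxx.
pose c := - (al i 0)^-1.
exists (c *: (al - al i 0 *: delta_mx i 0)), (c *: be); split.
  apply/subsetP => k; rewrite !inE !mxE.
  have [-> | hki] := eqVneq k i; first by rewrite mulr1n mulr1 subrr mulr0 eqxx.
  rewrite mulr0n mulr0 subr0 mulf_eq0 negb_or => /andP[_ hk].
  by have := subsetP hs k; rewrite !inE (negbTE hki) /=; apply.
rewrite -!scalemxAr -scalerDr mulmxBr -scalemxAr addrAC he add0r scalerN scalerA.
by rewrite /c mulNr mulVf // scaleN1r opprK.
Qed.

End ActiveSets.

Section PseudoInverse.
Variable R : realType.

Lemma penrose_uniq k l (N : 'M[R]_(k, l)) X1 X2 : penrose N X1 -> penrose N X2 -> X1 = X2.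
Proof.
case=> p11 p12 p13 p14 [p21 p22 p23 p24].
have e1 : X1 = X1 *m N *m X2.
  have h : X1 *m ((N *m X2) *m (N *m X1))^T = X1 by rewrite !mulmxA p21 p13 mulmxA p12.
  by rewrite -[in LHS]h trmx_mul p13 p23 !mulmxA p12.
have e2 : X2 = X1 *m N *m X2.
  have h : ((X2 *m N) *m (X1 *m N))^T *m X2 = X2.
    by rewrite mulmxA -(mulmxA X2 N X1) -(mulmxA X2) p11 p24 p22.
  by rewrite -[in LHS]h trmx_mul p14 p24 -!mulmxA (mulmxA X2 N X2) p22.
by rewrite e1 -e2.
Qed.

Lemma mp_pinvE k l (N : 'M[R]_(k, l)) X : penrose N X -> mp_pinv N = X.
Proof. by move=> hX; apply: (xget_unique _ hX) => Y hY; apply: penrose_uniq hY hX. Qed.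

(* Only C P = 1 and the symmetry of P C enter the four Penrose equations. *)
Lemma penrose_sandwich r k (C : 'M[R]_(r, k)) (M : 'M[R]_r) :
  row_free C -> M \in unitmx ->
  let P := C^T *m invmx (C *m C^T) in
  penrose (C^T *m M *m C) (P *m invmx M *m P^T).
Proof.
move=> fC uM P.
have CP : C *m P = 1%:M by rewrite /P mulmxA mulmxV // gram_unitmx.
have PC : P^T *m C^T = 1%:M by rewrite -trmx_mul CP trmx1.
have symPC : C^T *m P^T = P *m C.
  by rewrite /P trmx_mul trmx_inv trmx_mul trmxK mulmxA.
clearbody P.
have eCP l (Y : 'M[R]_(l, r)) : Y *m C *m P = Y by rewrite -mulmxA CP mulmx1.
have ePC l (Y : 'M[R]_(l, r)) : Y *m P^T *m C^T = Y by rewrite -mulmxA PC mulmx1.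
have eMM l (Y : 'M[R]_(l, r)) : Y *m M *m invmx M = Y by rewrite -mulmxA mulmxV ?mulmx1.
have eMiM l (Y : 'M[R]_(l, r)) : Y *m invmx M *m M = Y by rewrite -mulmxA mulVmx ?mulmx1.
split.
- by rewrite !mulmxA eCP eMM ePC.
- by rewrite !mulmxA ePC eMiM eCP.
- by rewrite !mulmxA eCP eMM trmx_mul !trmxK symPC.
- by rewrite !mulmxA ePC eMiM trmx_mul symPC.
Qed.

Lemma gram_pinv_factor l r k (H : 'M[R]_(l, r)) (C : 'M[R]_(r, k)) :
  row_free H^T -> row_free C ->
  H *m C *m mp_pinv ((H *m C)^T *m (H *m C)) *m (H *m C)^T
    = H *m invmx (H^T *m H) *m H^T.
Proof.
move=> fH fC; have uM : H^T *m H \in unitmx by rewrite -{2}[H]trmxK gram_unitmx.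
have -> : (H *m C)^T *m (H *m C) = C^T *m (H^T *m H) *m C by rewrite trmx_mul !mulmxA.
rewrite (mp_pinvE (penrose_sandwich fC uM)) /=.
set P := C^T *m _; have CP : C *m P = 1%:M by rewrite /P mulmxA mulmxV // gram_unitmx.
clearbody P; rewrite trmx_mul !mulmxA -(mulmxA H C P) CP mulmx1.
by rewrite -(mulmxA _ P^T C^T) -trmx_mul CP trmx1 mulmx1.
Qed.

End PseudoInverse.

Section ActiveSetOfProjection.
Variables (R : realType) (m p n : nat) (A : 'M[R]_(m, n)) (b : 'cV[R]_m)
  (B : 'M[R]_(p, n)) (d : 'cV[R]_p) (x : 'cV[R]_n).
Variables (y : 'cV[R]_n) (lam : 'cV[R]_m) (mu : 'cV[R]_p).
Hypothesis hK : KKT x A b B d y lam mu.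

Lemma kkt_supp_active : supp lam \subset Iact A b B d x.
Proof.
have [_ _ _ hc] := hK; apply/subsetP => i; rewrite !inE /PiD (proj_kkt hK) => hi.
by have /eqP := hc i; rewrite mulf_eq0 (negbTE hi) /= !mxE subr_eq0.
Qed.

Lemma Mset_reduce lam' mu' : vge 0 lam' -> supp lam' \subset supp lam ->
  A^T *m lam' + B^T *m mu' = A^T *m lam + B^T *m mu -> Mset A b B d x lam' mu'.
Proof.
have [[hyA hyB] hs _ hc] := hK; move=> hl' hs' he'.
rewrite /Mset /PiD (proj_kkt hK); split=> //.
- by rewrite -addrA he' addrA.
- by move=> i; have := hyA i; rewrite !mxE subr_ge0.
- by rewrite hyB subrr.
- apply/matrixP => r c; rewrite (ord1 r) (ord1 c) [RHS]mxE.
  change (vdot lam' (A *m y - b) = 0); rewrite vdotE big1 // => i _.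
  have [-> | hi] := eqVneq (lam' i 0) 0; first by rewrite mul0r.
  have : i \in supp lam by apply: (subsetP hs'); rewrite inE.
  rewrite inE => hli; have /eqP := hc i.
  by rewrite mulf_eq0 (negbTE hli) => /eqP ->; rewrite mulr0.
Qed.

Lemma maximal_Dx_exists : \rank B = p ->
  exists K, [/\ inDx A b B d x K, indep A B K
    & forall i, i \in Iact A b B d x -> i \notin K -> ~ indep A B (i |: K)].
Proof.
move=> rankB; have [_ _ hl _] := hK.
have [lam' [mu' [hl' hs' he' hi']]] := reduce_support A rankB mu hl.
have [K [hSK hKI hKi hmax]] :=
  indep_maximal_extension (subset_trans hs' kkt_supp_active) hi'.
exists K; split=> //; split; last exact: gmat_rank.
- exists lam', mu'; split; first exact: Mset_reduce.
  by move=> i hi; apply: (subsetP hSK); rewrite inE.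
- exact: hKI.
Qed.

End ActiveSetOfProjection.

Lemma pinv_projector_maximal (R : realType) (m p n : nat) (A : 'M[R]_(m, n)) (B : 'M[R]_(p, n))
    (I K : {set 'I_m}) :
  \rank B = p -> K \subset I -> indep A B K ->
  (forall i, i \in I -> i \notin K -> ~ indep A B (i |: K)) ->
  1%:M - gmat A B I *m mp_pinv ((gmat A B I)^T *m gmat A B I) *m (gmat A B I)^T
    = projK A B K.
Proof.
move=> rankB hKI hK hmax; set G := gmat A B I; set H := gmat A B K.
have fH : row_free H^T := indep_row_free hK.
have [C GHC] : exists C, G = H *m C := gmat_factor (indep_maximal_span rankB hK hmax).
have [E HGE] : exists E, H = G *m E.
  apply: gmat_factor => i hi; exists (delta_mx i 0), 0.
  by rewrite supp_delta sub1set (subsetP hKI) // mulmx0 addr0.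
have fC : row_free C.
  apply/row_freeP; exists E; apply: trmx_inj; apply: (row_free_inj fH).
  by rewrite -!trmx_mul mulmxA -GHC -HGE mulmx1.
by rewrite /projK -/H GHC gram_pinv_factor.
Qed.

Theorem theorem2p3 (R : realType) (m p n : nat)
  (A : 'M[R]_(m, n)) (B : 'M[R]_(p, n)) (b : 'cV[R]_m) (d : 'cV[R]_p) :
  \rank B = p -> (p <= n)%N ->
  (exists y, polyD A b B d y) ->
  forall x : 'cV[R]_n, Pset A b B d x (P0 A b B d x).
Proof.
(* p <= n follows from \rank B = p. *)
move=> rankB _ hD x.
have [y [lam [mu hK]]] := kkt_exists x hD.
have [K [hKx hK' hmax]] := maximal_Dx_exists hK rankB.
exists K; split=> //; have [_ hKI _] := hKx.
exact: pinv_projector_maximal rankB hKI hK' hmax.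
Qed.
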